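(* Let $K\ge 2$ be an even integer, let $M\ge K/2$ be an integer, and let $\tau>0$ and $p_{\max}>0$. Let $\beta_1,\ldots,\beta_K>0$ satisfy $\beta_j>\beta_i$ for all $j\in\mathcal{K}_c=\{1,\ldots,K/2\}$ and all $i\in\mathcal{K}_e=\{K/2+1,\ldots,K\}$. Set $\bar M=M+1-K/2$. For a power vector $\mathbf{p}=(p_1,\ldots,p_K)^T$ with $p_k\ge 0$ define $$R_k(\mathbf{p})=\tau\log_2\!\left(1+p_k\beta_k\bar M\right)\ \text{for } k\in\mathcal{K}_c,\qquad R_k(\mathbf{p})=\tau\log_2\!\left(1+\frac{p_k\beta_k}{p_{k-K/2}\beta_k+1}\right)\ \text{for } k\in\mathcal{K}_e.$$ Consider the problem of maximizing $\sum_{k=1}^K R_k(\mathbf{p})$ over $\mathbf{p}\succeq 0$ subject to $\sum_{k=1}^K p_k\le p_{\max}$. Then a feasible $\mathbf{p}$ is a maximizer only if $p_k=0$ for all $k\in\mathcal{K}_e$, and the maximum is attained by a power vector with $p_k=0$ for all $k\in\mathcal{K}_e$; i.e., the sum rate is maximized if and only if $p_k=0$ for all $k\in\mathcal{K}_e$ (together with an optimal allocation among the cell-center users).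
   Context: This models downlink power-domain NOMA with perfect CSI from an $M$-antenna base station to $K$ single-antenna users, split into $K/2$ cell-center users (indices $\mathcal{K}_c$) and $K/2$ cell-edge users (indices $\mathcal{K}_e$); users $k$ and $k+K/2$ form a group sharing a zero-forcing beam. $\beta_k$ is the large-scale fading coefficient of user $k$, $p_k$ its normalized transmit power, $\tau$ the fraction of the coherence interval used for data. The rate expressions above are the (perfect-CSI) rates assigned to cell-center users (after successive interference cancellation) and cell-edge users (treating the in-group cell-center signal as noise). *)

From HB Require Import structures.
From mathcomp Require Import all_boot all_order all_algebra.
From mathcomp Require Import all_classical all_reals all_analysis.
Set Implicit Arguments. Unset Strict Implicit. Unset Printing Implicit Defensive.
Import Order.TTheory GRing.Theory Num.Theory.
Local Open Scope ring_scope.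

Definition log2 (R : realType) (x : R) : R := ln x / ln 2.

(* Users are indexed 0,...,K-1 (0-based): cell-center users k < K/2,
   cell-edge users K/2 <= k < K; edge user k is paired with center user k - K/2. *)
Definition rate (R : realType) (K M : nat) (tau : R) (beta p : nat -> R) (k : nat) : R :=
  let L := K./2 in
  let Mbar : R := (M + 1 - L)%:R in
  if (k < L)%N then tau * log2 (1 + p k * beta k * Mbar)
  else tau * log2 (1 + p k * beta k / (p (k - L)%N * beta k + 1)).

Definition sum_rate (R : realType) (K M : nat) (tau : R) (beta p : nat -> R) : R :=
  \sum_(0 <= k < K) rate K M tau beta p k.

Definition feasible (R : realType) (K : nat) (pmax : R) (p : nat -> R) : Prop :=
  (forall k, (k < K)%N -> 0 <= p k) /\ \sum_(0 <= k < K) p k <= pmax.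

Definition is_maximizer (R : realType) (K M : nat) (tau pmax : R) (beta p : nat -> R) : Prop :=
  feasible K pmax p /\
  forall q, feasible K pmax q -> sum_rate K M tau beta q <= sum_rate K M tau beta p.

(* Pair each cell-edge user c + K/2 with its cell-center partner c.  With center
   gain a = beta_c Mbar, edge gain b = beta_(c+K/2) < a and powers x, y, the rate
   of the pair is (up to the factor tau / ln 2) ln ((1 + x a)(1 + (x + y) b) /
   (1 + x b)); moving y onto the center user raises it to ln (1 + (x + y) a),
   since the two numerators over 1 + x b differ by y (a - b).  Hence a maximizer
   gives no power to edge users, and after merging, the problem is to maximize
   sum_c ln (1 + p_c a_c) subject to sum_c p_c <= pmax.  Water-filling solves it:
   the water level exists by the intermediate value theorem, and concavity of ln
   shows that no feasible allocation does better. *)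

From HB Require Import structures.
From mathcomp Require Import all_boot all_order all_algebra.
From mathcomp Require Import all_classical all_reals all_analysis.
From mathcomp Require Import ring zify.
Set Implicit Arguments. Unset Strict Implicit. Unset Printing Implicit Defensive.
Import Order.TTheory GRing.Theory Num.Theory.
Import numFieldNormedType.Exports.
Local Open Scope ring_scope.
Lemma ltr_sum_nat_le {R : numDomainType} (m n j : nat) (F G : nat -> R) :
  (m <= j < n)%N -> (forall i, (m <= i < n)%N -> F i <= G i) -> F j < G j ->
  \sum_(m <= i < n) F i < \sum_(m <= i < n) G i.
Proof.
move=> jmn leFG ltFGj.
rewrite -subr_gt0 -sumrB (bigD1_seq j) ?mem_index_iota ?iota_uniq //=.
rewrite ltr_wpDr ?subr_gt0 // big_seq_cond sumr_ge0 // => i /andP[+ _].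
by rewrite mem_index_iota subr_ge0 => /leFG.
Qed.

Lemma ln_sub_le_div {R : realType} (x y : R) :
  0 < x -> 0 < y -> ln y - ln x <= (y - x) / x.
Proof.
move=> x_gt0 y_gt0; rewrite -ln_div ?posrE //.
have -> : (y - x) / x = y / x - 1 by rewrite mulrBl divff ?gt_eqF.
rewrite -[X in ln X](subrK 1) addrC le_ln1Dx //.
by rewrite -subr_gt0 opprK subrK divr_gt0.
Qed.

Section MergePairPower.
Variables (R : realType) (a b x y : R).
Hypotheses (b_gt0 : 0 < b) (b_le_a : b <= a) (x_ge0 : 0 <= x) (y_ge0 : 0 <= y).

Let a_gt0 : 0 < a := lt_le_trans b_gt0 b_le_a.
Let xa1_gt0 : 0 < 1 + x * a := ltr_pwDl ltr01 (mulr_ge0 x_ge0 (ltW a_gt0)).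
Let xb1_gt0 : 0 < x * b + 1 := ltr_wpDl (mulr_ge0 x_ge0 (ltW b_gt0)) ltr01.
Let xyb1_gt0 : 0 < 1 + (x + y) * b :=
  ltr_pwDl ltr01 (mulr_ge0 (addr_ge0 x_ge0 y_ge0) (ltW b_gt0)).
Let xya1_gt0 : 0 < 1 + (x + y) * a :=
  ltr_pwDl ltr01 (mulr_ge0 (addr_ge0 x_ge0 y_ge0) (ltW a_gt0)).

Lemma ln_pair_rateE :
  ln (1 + x * a) + ln (1 + y * b / (x * b + 1)) =
  ln ((1 + x * a) * (1 + (x + y) * b) / (x * b + 1)).
Proof.
have edge_gt0 : 0 < 1 + y * b / (x * b + 1).
  by rewrite ltr_pwDl // divr_ge0 ?mulr_ge0 // ltW.
by rewrite -lnM ?posrE //; congr ln; field; rewrite gt_eqF.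
Qed.

Lemma merge_pair_rate_gap :
  (1 + (x + y) * a) * (x * b + 1) - (1 + x * a) * (1 + (x + y) * b) =
  y * (a - b).
Proof. by ring. Qed.

Lemma ln_pair_rate_le_merge :
  ln (1 + x * a) + ln (1 + y * b / (x * b + 1)) <= ln (1 + (x + y) * a).
Proof.
rewrite ln_pair_rateE ler_ln ?posrE ?ler_pdivrMr ?divr_gt0 ?mulr_gt0 //.
by rewrite -subr_ge0 merge_pair_rate_gap mulr_ge0 // subr_ge0.
Qed.

Lemma ln_pair_rate_lt_merge : 0 < y -> b < a ->
  ln (1 + x * a) + ln (1 + y * b / (x * b + 1)) < ln (1 + (x + y) * a).
Proof.
move=> y_gt0 b_lt_a.
rewrite ln_pair_rateE ltr_ln ?posrE ?ltr_pdivrMr ?divr_gt0 ?mulr_gt0 //.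
by rewrite -subr_gt0 merge_pair_rate_gap mulr_gt0 // subr_gt0.
Qed.

End MergePairPower.

Section Waterfilling.
Variables (R : realType) (L : nat) (a : nat -> R).

Definition waterfill_power (mu : R) (c : nat) : R := Num.max 0 (mu - (a c)^-1).

Definition water_volume (mu : R) : R := \sum_(0 <= c < L) waterfill_power mu c.

Lemma waterfill_power_ge0 mu c : 0 <= waterfill_power mu c.
Proof. by rewrite le_max lexx. Qed.

Lemma continuous_water_volume : continuous water_volume.
Proof.
apply: continuous_big => [|c _ mu]; first exact: (@add_continuous R).
apply: (@continuous_max _ _ (fun=> 0) (fun mu => mu - (a c)^-1)).
  exact: cst_continuous.
by apply: continuousB; [move=> ?|exact: cst_continuous].
Qed.

Hypothesis a_gt0 : forall c, (c < L)%N -> 0 < a c.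

Lemma water_volume_eq0 mu : mu <= 0 -> water_volume mu = 0.
Proof.
move=> mu_le0; rewrite /water_volume big_nat big1 // => c /andP[_ cL].
apply/max_idPl; rewrite subr_le0 (le_trans mu_le0) // invr_ge0 ltW //.
exact: a_gt0.
Qed.

Lemma exists_water_level (P : R) : (0 < L)%N -> 0 < P ->
  exists2 mu, 0 < mu & water_volume mu = P.
Proof.
move=> L_gt0 P_gt0.
pose top := P + (a 0%N)^-1.
have top_ge0 : 0 <= top by rewrite addr_ge0 ?invr_ge0 ?ltW ?a_gt0.
have P_le_top : P <= water_volume top.
  rewrite /water_volume big_ltn // -[P]addr0 lerD ?sumr_ge0 //.
    by rewrite /waterfill_power /top addrK le_max lexx orbT.
  by move=> c _; exact: waterfill_power_ge0.
have [mu _ volP] : exists2 mu, mu \in `[0, top] & water_volume mu = P.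
  apply: IVT => //; first exact/continuous_subspaceT/continuous_water_volume.
  by rewrite water_volume_eq0 // ge_min le_max ltW //= P_le_top orbT.
exists mu => //; rewrite ltNge; apply/negP => /water_volume_eq0.
by rewrite volP => P0; rewrite P0 ltxx in P_gt0.
Qed.

(* Concavity of ln at the water-filling point, whose level [mu] is the
   Lagrange multiplier of the power constraint. *)
Lemma ln_waterfill_gain (mu r : R) c : 0 < mu -> (c < L)%N -> 0 <= r ->
  ln (1 + r * a c) - ln (1 + waterfill_power mu c * a c) <=
  (r - waterfill_power mu c) / mu.
Proof.
move=> mu_gt0 cL r_ge0; have ac_gt0 := a_gt0 cL.
set w := waterfill_power mu c.
have w_ge0 : 0 <= w by exact: waterfill_power_ge0.
apply: le_trans (ln_sub_le_div _ _) _.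
- by rewrite ltr_pwDl // mulr_ge0 // ltW.
- by rewrite ltr_pwDl // mulr_ge0 // ltW.
have -> : 1 + r * a c - (1 + w * a c) = a c * (r - w) by ring.
rewrite /w /waterfill_power; case: (leP 0 (mu - (a c)^-1)) => level.
  have -> : 1 + (mu - (a c)^-1) * a c = mu * a c by field; rewrite gt_eqF.
  have -> : a c * (r - (mu - (a c)^-1)) / (mu * a c) = (r - (mu - (a c)^-1)) / mu.
    by field; rewrite !gt_eqF.
  exact: lexx.
have mu_ac_lt1 : mu * a c < 1.
  by rewrite -ltr_pdivlMr // div1r -subr_lt0.
rewrite subr0 mul0r addr0 divr1 ler_pdivlMr // mulrAC [a c * mu]mulrC.
by rewrite -[leRHS]mul1r ler_wpM2r // ltW.
Qed.

Lemma waterfill_optimal (mu : R) (r : nat -> R) : 0 < mu ->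
  (forall c, (c < L)%N -> 0 <= r c) -> \sum_(0 <= c < L) r c <= water_volume mu ->
  \sum_(0 <= c < L) ln (1 + r c * a c) <=
  \sum_(0 <= c < L) ln (1 + waterfill_power mu c * a c).
Proof.
move=> mu_gt0 r_ge0 r_le_volume.
rewrite -subr_le0 -sumrB.
apply: le_trans (_ : \sum_(0 <= c < L) (r c - waterfill_power mu c) / mu <= 0).
  by apply: ler_sum_nat => c /andP[_ cL]; apply: ln_waterfill_gain; rewrite ?r_ge0.
by rewrite -mulr_suml sumrB pmulr_lle0 ?invr_gt0 // subr_le0.
Qed.

End Waterfilling.

Lemma big_nat_halves {R : nmodType} (L : nat) (f : nat -> R) :
  \sum_(0 <= k < L + L) f k = \sum_(0 <= c < L) (f c + f (c + L)%N).
Proof.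
rewrite (big_cat_nat (n := L)) ?leq_addr //= -{2}[L]add0n big_addn addnK.
by rewrite big_split.
Qed.

Section SumRate.
Variables (R : realType) (K M : nat) (tau : R) (beta : nat -> R).
Local Notation L := K./2.

Definition center_gain (c : nat) : R := beta c * (M + 1 - L)%:R.

Definition pair_rate (p : nat -> R) (c : nat) : R :=
  rate K M tau beta p c + rate K M tau beta p (c + L).

Definition merge_edge (p : nat -> R) (k : nat) : R :=
  if (k < L)%N then p k + p (k + L)%N else 0.

Lemma pair_rateE p c : (c < L)%N ->
  pair_rate p c = tau / ln 2 * (ln (1 + p c * center_gain c) +
    ln (1 + p (c + L)%N * beta (c + L)%N / (p c * beta (c + L)%N + 1))).
Proof.
move=> cL; rewrite /pair_rate /rate cL ltnNge leq_addl /= addnK /log2.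
by rewrite /center_gain !mulrA; ring.
Qed.

Lemma pair_rate_center_only p c : (c < L)%N -> p (c + L)%N = 0 ->
  pair_rate p c = tau / ln 2 * ln (1 + p c * center_gain c).
Proof. by move=> cL pe0; rewrite pair_rateE // pe0 !mul0r addr0 ln1 addr0. Qed.

Lemma merge_edge_center p c : (c < L)%N -> merge_edge p c = p c + p (c + L)%N.
Proof. by rewrite /merge_edge => ->. Qed.

Lemma merge_edge_edge p k : (L <= k)%N -> merge_edge p k = 0.
Proof. by rewrite /merge_edge ltnNge => ->. Qed.

Lemma pair_rate_merge_edge p c : (c < L)%N ->
  pair_rate (merge_edge p) c =
  tau / ln 2 * ln (1 + (p c + p (c + L)%N) * center_gain c).
Proof.
move=> cL; have edge0 : merge_edge p (c + L) = 0 by rewrite merge_edge_edge ?leq_addl.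
by rewrite pair_rate_center_only // merge_edge_center.
Qed.

Hypothesis K_even : ~~ odd K.

Lemma K_halves : K = (L + L)%N.
Proof. by rewrite addnn -{1}(odd_double_half K) (negbTE K_even). Qed.

Lemma center_lt_K {c} : (c < L)%N -> (c < K)%N.
Proof. by move/leq_trans; apply; rewrite [X in (_ <= X)%N]K_halves leq_addr. Qed.

Lemma edge_lt_K {c} : (c < L)%N -> (c + L < K)%N.
Proof. by rewrite [X in (_ + _ < X)%N]K_halves ltn_add2r. Qed.

Lemma sum_halves (f : nat -> R) :
  \sum_(0 <= k < K) f k = \sum_(0 <= c < L) (f c + f (c + L)%N).
Proof. by rewrite [X in index_iota 0 X]K_halves big_nat_halves. Qed.

Lemma sum_rate_pairs p :
  sum_rate K M tau beta p = \sum_(0 <= c < L) pair_rate p c.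
Proof. exact: sum_halves. Qed.

Lemma sum_rate_center_only p : (forall c, (c < L)%N -> p (c + L)%N = 0) ->
  sum_rate K M tau beta p =
  tau / ln 2 * \sum_(0 <= c < L) ln (1 + p c * center_gain c).
Proof.
move=> p_edge; rewrite sum_rate_pairs mulr_sumr.
by apply: eq_big_nat => c /andP[_ cL]; rewrite pair_rate_center_only ?p_edge.
Qed.

Lemma sum_rate_merge_edge p :
  sum_rate K M tau beta (merge_edge p) =
  tau / ln 2 * \sum_(0 <= c < L) ln (1 + (p c + p (c + L)%N) * center_gain c).
Proof.
rewrite sum_rate_pairs mulr_sumr.
by apply: eq_big_nat => c /andP[_ cL]; rewrite pair_rate_merge_edge.
Qed.

Lemma sum_merge_edge p :
  \sum_(0 <= k < K) merge_edge p k = \sum_(0 <= k < K) p k.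
Proof.
rewrite !sum_halves; apply: eq_big_nat => c /andP[_ cL].
by rewrite merge_edge_center // merge_edge_edge ?leq_addl // addr0.
Qed.

Lemma feasible_merge_edge pmax p :
  feasible K pmax p -> feasible K pmax (merge_edge p).
Proof.
move=> [p_ge0 p_sum]; split; last by rewrite sum_merge_edge.
move=> k kK; rewrite /merge_edge; case: ifP => // kL.
by apply: addr_ge0; apply: p_ge0; rewrite ?edge_lt_K.
Qed.

Hypotheses (L_le_M : (L <= M)%N) (tau_gt0 : 0 < tau).
Hypothesis beta_gt0 : forall k, (k < K)%N -> 0 < beta k.
Hypothesis beta_center_gt_edge :
  forall j i, (j < L)%N -> (L <= i < K)%N -> beta i < beta j.

Lemma rate_scale_gt0 : 0 < tau / ln 2.
Proof. by rewrite divr_gt0 // ln_gt0 // ltr1n. Qed.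

Lemma edge_gain_gt0 {c} : (c < L)%N -> 0 < beta (c + L)%N.
Proof. by move=> cL; apply/beta_gt0/edge_lt_K. Qed.

Lemma edge_gain_lt_center {c} : (c < L)%N -> beta (c + L)%N < center_gain c.
Proof.
move=> cL; apply: (lt_le_trans (beta_center_gt_edge cL _)).
  by rewrite leq_addl edge_lt_K.
have beta_c_ge0 : 0 <= beta c := ltW (beta_gt0 (center_lt_K cL)).
have Mbar_ge1 : 1 <= (M + 1 - L)%:R :> R by rewrite ler1n; lia.
by rewrite /center_gain ler_peMr.
Qed.

Lemma pair_rate_le_merge p c : (forall k, (k < K)%N -> 0 <= p k) -> (c < L)%N ->
  pair_rate p c <= pair_rate (merge_edge p) c.
Proof.
move=> p_ge0 cL; have [cK ceK] := (center_lt_K cL, edge_lt_K cL).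
have [b_gt0 b_lt_a] := (edge_gain_gt0 cL, edge_gain_lt_center cL).
rewrite pair_rateE // pair_rate_merge_edge // ler_pM2l ?rate_scale_gt0 //.
by apply: ln_pair_rate_le_merge; rewrite ?p_ge0 ?(ltW b_lt_a).
Qed.

Lemma pair_rate_lt_merge p c : (forall k, (k < K)%N -> 0 <= p k) -> (c < L)%N ->
  0 < p (c + L)%N -> pair_rate p c < pair_rate (merge_edge p) c.
Proof.
move=> p_ge0 cL pe_gt0; have [cK ceK] := (center_lt_K cL, edge_lt_K cL).
have [b_gt0 b_lt_a] := (edge_gain_gt0 cL, edge_gain_lt_center cL).
rewrite pair_rateE // pair_rate_merge_edge // ltr_pM2l ?rate_scale_gt0 //.
by apply: ln_pair_rate_lt_merge; rewrite ?p_ge0 ?(ltW b_lt_a).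
Qed.

Lemma sum_rate_le_merge_edge p : (forall k, (k < K)%N -> 0 <= p k) ->
  sum_rate K M tau beta p <= sum_rate K M tau beta (merge_edge p).
Proof.
move=> p_ge0; rewrite !sum_rate_pairs; apply: ler_sum_nat => c /andP[_ cL].
exact: pair_rate_le_merge.
Qed.

Lemma sum_rate_lt_merge_edge p k : (forall k, (k < K)%N -> 0 <= p k) ->
  (L <= k < K)%N -> 0 < p k ->
  sum_rate K M tau beta p < sum_rate K M tau beta (merge_edge p).
Proof.
move=> p_ge0 /andP[Lk kK] pk_gt0; rewrite !sum_rate_pairs.
have kE : k = ((k - L) + L)%N by rewrite subnK.
apply: (@ltr_sum_nat_le _ _ _ (k - L)).
- by rewrite leq0n /=; lia.
- by move=> c /andP[_ cL]; exact: pair_rate_le_merge.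
- by apply: pair_rate_lt_merge => //; [lia | rewrite -kE].
Qed.

Lemma exists_center_only_maximizer pmax : (0 < L)%N -> 0 < pmax ->
  exists p, is_maximizer K M tau pmax beta p /\ forall k, (L <= k < K)%N -> p k = 0.
Proof.
move=> L_gt0 pmax_gt0.
have gain_gt0 c : (c < L)%N -> 0 < center_gain c.
  by move=> cL; exact: lt_trans (edge_gain_gt0 cL) (edge_gain_lt_center cL).
have [mu mu_gt0 volume] := exists_water_level gain_gt0 L_gt0 pmax_gt0.
pose p k := if (k < L)%N then waterfill_power center_gain mu k else 0.
have p_center c : (c < L)%N -> p c = waterfill_power center_gain mu c.
  by rewrite /p => ->.
have p_edge k : (L <= k)%N -> p k = 0 by rewrite /p ltnNge => ->.
exists p; split; last by move=> k /andP[Lk _]; exact: p_edge.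
have p_sum : \sum_(0 <= k < K) p k = pmax.
  rewrite sum_halves -volume; apply: eq_big_nat => c /andP[_ cL].
  by rewrite p_center // p_edge ?leq_addl // addr0.
have p_feasible : feasible K pmax p.
  split; last by rewrite p_sum.
  by move=> k _; rewrite /p; case: ifP => // _; exact: waterfill_power_ge0.
split=> // q [q_ge0 q_sum].
apply: le_trans (sum_rate_le_merge_edge q_ge0) _.
rewrite sum_rate_merge_edge sum_rate_center_only => [|c _]; last exact/p_edge/leq_addl.
rewrite ler_pM2l ?rate_scale_gt0 //.
under [X in _ <= X]eq_big_nat => c /andP[_ cL] do rewrite p_center //.
apply: waterfill_optimal => //; last by rewrite volume -sum_halves.
by move=> c cL; apply: addr_ge0; apply: q_ge0; [exact: center_lt_K | exact: edge_lt_K].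
Qed.

End SumRate.

Theorem lemma1 (R : realType) (K M : nat) (tau pmax : R) (beta : nat -> R) :
  (2 <= K)%N -> ~~ odd K -> (K./2 <= M)%N -> 0 < tau -> 0 < pmax ->
  (forall k, (k < K)%N -> 0 < beta k) ->
  (forall j i, (j < K./2)%N -> (K./2 <= i < K)%N -> beta i < beta j) ->
  (forall p, is_maximizer K M tau pmax beta p ->
     forall k, (K./2 <= k < K)%N -> p k = 0) /\
  (exists p, is_maximizer K M tau pmax beta p /\
     forall k, (K./2 <= k < K)%N -> p k = 0).
Proof.
move=> K_ge2 K_even L_le_M tau_gt0 pmax_gt0 beta_gt0 beta_center_gt_edge.
split; last by apply: exists_center_only_maximizer => //; lia.
move=> p [p_feasible p_max] k k_edge; have [p_ge0 _] := p_feasible.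
case: (eqVneq (p k) 0) => // pk_neq0.
have pk_gt0 : 0 < p k by rewrite lt_def pk_neq0 p_ge0 //; case/andP: k_edge.
have := p_max _ (feasible_merge_edge K_even p_feasible).
by rewrite leNgt (sum_rate_lt_merge_edge K_even L_le_M tau_gt0 beta_gt0
  beta_center_gt_edge p_ge0 k_edge pk_gt0).
Qed.
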